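(* (Provably in $\mathsf{Z}^-_{\mathrm{FTM}\omega}$.) Let $E$ be a strict well-ordering of a set $U$. Then there is an ordinal $\lambda$ and an order isomorphism of $\langle U,E\rangle$ onto $\langle\lambda,\in\rangle$.
   Context: $\mathsf{Z}^-_{\mathrm{FTM}\omega}$ is Zermelo set theory without Power Set and Choice (Extensionality, Pairing, Union, Infinity, Regularity, Separation) plus: (FC) every set $X$ has a superset $Y$ such that every finite $x\subseteq Y$ belongs to $Y$; (TS) every set has a transitive superset; (MC) every set binary relation $A$ that is well-founded and extensional admits a transitive set $X$ and a bijection $\eta$ from its field onto $X$ with $jAk\iff\eta(j)\in\eta(k)$; (Count) every set admits an injection into $\omega$. *)

(* A model of the first-order theory Z^-_{FTM omega} is a type V
   with a binary relation mem (equality of the model = Leibniz equality).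
   "Provable in T" is rendered (via soundness/completeness) as "holds in every
   model of T". Separation is a first-order schema, stated via an explicit
   syntax of formulas of the language {mem, =}. *)

Section Model.
Variable V : Type.
Variable mem : V -> V -> Prop.

Inductive form : Type :=
| FMem : nat -> nat -> form
| FEq  : nat -> nat -> form
| FFalse : form
| FImp : form -> form -> form
| FAnd : form -> form -> form
| FOr  : form -> form -> form
| FAll : form -> form
| FEx  : form -> form.

Definition scons (x : V) (e : nat -> V) : nat -> V :=
  fun n => match n with 0 => x | S k => e k end.

Fixpoint sat (e : nat -> V) (p : form) : Prop :=
  match p with
  | FMem i j => mem (e i) (e j)
  | FEq i j => e i = e j
  | FFalse => False
  | FImp a b => sat e a -> sat e b
  | FAnd a b => sat e a /\ sat e b
  | FOr a b => sat e a \/ sat e b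
  | FAll a => forall x, sat (scons x e) a
  | FEx a => exists x, sat (scons x e) a
  end.

Definition subset (a b : V) : Prop := forall x, mem x a -> mem x b.
Definition transitive_set (a : V) : Prop := forall x y, mem x y -> mem y a -> mem x a.
Definition is_empty (e : V) : Prop := forall z, ~ mem z e.
Definition is_upair (c a b : V) : Prop := forall z, mem z c <-> (z = a \/ z = b).
Definition is_opair (p a b : V) : Prop :=
  forall z, mem z p <-> (is_upair z a a \/ is_upair z a b).
Definition pin (f a b : V) : Prop := exists p, mem p f /\ is_opair p a b.
Definition is_succ (s x : V) : Prop := forall z, mem z s <-> (mem z x \/ z = x).
Definition inductive (I : V) : Prop :=
  (exists e, mem e I /\ is_empty e) /\
  (forall x, mem x I -> exists s, mem s I /\ is_succ s x).
Definition is_omega (w : V) : Prop :=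
  inductive w /\ forall I, inductive I -> subset w I.

Definition fun_between (f A B : V) : Prop :=
  (forall p, mem p f -> exists a b, is_opair p a b /\ mem a A /\ mem b B) /\
  (forall a, mem a A -> exists b, pin f a b) /\
  (forall a b b', pin f a b -> pin f a b' -> b = b').
Definition injection (f A B : V) : Prop :=
  fun_between f A B /\ (forall a a' b, pin f a b -> pin f a' b -> a = a').
Definition bijection (f A B : V) : Prop :=
  injection f A B /\ (forall b, mem b B -> exists a, mem a A /\ pin f a b).

Definition finite (x : V) : Prop :=
  exists w n f, is_omega w /\ mem n w /\ bijection f x n.

Definition is_relation (A : V) : Prop :=
  forall p, mem p A -> exists a b, is_opair p a b.
Definition infield (A x : V) : Prop := exists y, pin A x y \/ pin A y x.
Definition wf_rel (A : V) : Prop :=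
  forall S, (exists s, mem s S) ->
    exists m, mem m S /\ forall s, mem s S -> ~ pin A s m.
Definition ext_rel (A : V) : Prop :=
  forall j k, infield A j -> infield A k ->
    (forall i, pin A i j <-> pin A i k) -> j = k.

Record ZFTMw : Prop := {
  ax_ext : forall a b, (forall x, mem x a <-> mem x b) -> a = b;
  ax_pair : forall a b, exists c, is_upair c a b;
  ax_union : forall a, exists u, forall x, mem x u <-> exists y, mem y a /\ mem x y;
  ax_inf : exists I, inductive I;
  ax_reg : forall x, (exists y, mem y x) ->
             exists y, mem y x /\ forall z, mem z x -> ~ mem z y;
  ax_sep : forall (phi : form) (env : nat -> V) (a : V),
             exists b, forall x, mem x b <-> (mem x a /\ sat (scons x env) phi);
  ax_FC : forall X, exists Y, subset X Y /\
             forall x, finite x -> subset x Y -> mem x Y;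
  ax_TS : forall X, exists Y, subset X Y /\ transitive_set Y;
  ax_MC : forall A, is_relation A -> wf_rel A -> ext_rel A ->
            forall F, (forall x, mem x F <-> infield A x) ->
            exists X eta, transitive_set X /\ bijection eta F X /\
              forall j k, mem j F -> mem k F ->
                (pin A j k <-> exists u v, pin eta j u /\ pin eta k v /\ mem u v);
  ax_count : forall X, exists w f, is_omega w /\ injection f X w
}.

Definition strict_wellorder (U : V) (R : V -> V -> Prop) : Prop :=
  (forall x, mem x U -> ~ R x x) /\
  (forall x y z, mem x U -> mem y U -> mem z U -> R x y -> R y z -> R x z) /\
  (forall x y, mem x U -> mem y U -> R x y \/ x = y \/ R y x) /\
  (forall S, subset S U -> (exists s, mem s S) ->
     exists m, mem m S /\ forall s, mem s S -> s <> m -> R m s).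

Definition ordinal (lam : V) : Prop :=
  transitive_set lam /\ strict_wellorder lam mem.

Definition order_iso (f U E lam : V) : Prop :=
  bijection f U lam /\
  forall x y u v, mem x U -> mem y U -> pin f x u -> pin f y v ->
    (pin E x y <-> mem u v).

End Model.

(* Restrict E to U and apply the Mostowski collapse axiom (MC) to the
   restriction: a strict well-ordering is well-founded and extensional, so it
   collapses onto a transitive set X, and X is an ordinal because membership on
   it inherits irreflexivity, transitivity and trichotomy from E, while
   Regularity supplies least elements.  MC only sees the field of the relation,
   which is all of U once U has two points; the empty and one-point cases are
   collapsed by hand onto 0 and 1. *)

From Pilot Require Import Defs.
From Stdlib Require Import Classical.

Section Collapse.

Variable V : Type.
Variable mem : V -> V -> Prop.
Hypothesis HT : ZFTMw V mem.

Local Notation sat := (Defs.sat V mem).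
Local Notation is_upair := (Defs.is_upair V mem).
Local Notation is_opair := (Defs.is_opair V mem).
Local Notation is_empty := (Defs.is_empty V mem).
Local Notation pin := (Defs.pin V mem).
Local Notation transitive_set := (Defs.transitive_set V mem).
Local Notation is_relation := (Defs.is_relation V mem).
Local Notation infield := (Defs.infield V mem).
Local Notation wf_rel := (Defs.wf_rel V mem).
Local Notation ext_rel := (Defs.ext_rel V mem).
Local Notation strict_wellorder := (Defs.strict_wellorder V mem).
Local Notation ordinal := (Defs.ordinal V mem).
Local Notation order_iso := (Defs.order_iso V mem).

Definition fupair (z a b : nat) : form :=
  FAnd (FAll (FImp (FMem 0 (S z)) (FOr (FEq 0 (S a)) (FEq 0 (S b)))))
       (FAll (FImp (FOr (FEq 0 (S a)) (FEq 0 (S b))) (FMem 0 (S z)))).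

Definition fopair (p a b : nat) : form :=
  FAnd (FAll (FImp (FMem 0 (S p))
                   (FOr (fupair 0 (S a) (S a)) (fupair 0 (S a) (S b)))))
       (FAll (FImp (FOr (fupair 0 (S a) (S a)) (fupair 0 (S a) (S b)))
                   (FMem 0 (S p)))).

Lemma sat_fupair e z a b : sat e (fupair z a b) <-> is_upair (e z) (e a) (e b).
Proof.
  unfold Defs.is_upair; simpl; split.
  - intros [H1 H2] w; split; [apply H1 | apply H2].
  - intros H; split; intros w; apply H.
Qed.

Lemma sat_fopair e p a b : sat e (fopair p a b) <-> is_opair (e p) (e a) (e b).
Proof.
  unfold Defs.is_opair, fopair; cbn [Defs.sat]; split.
  - intros [H1 H2] w; specialize (H1 w); specialize (H2 w).
    rewrite !sat_fupair in H1, H2; simpl in *; tauto.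
  - intros H; split; intros w; rewrite !sat_fupair; simpl; apply H.
Qed.

Lemma upair_unique c c' a b : is_upair c a b -> is_upair c' a b -> c = c'.
Proof.
  intros Hc Hc'; apply (ax_ext _ _ HT); intros x; rewrite (Hc x), (Hc' x); tauto.
Qed.

Lemma opair_exists a b : exists p, is_opair p a b.
Proof.
  destruct (ax_pair _ _ HT a a) as [s Hs].
  destruct (ax_pair _ _ HT a b) as [c Hc].
  destruct (ax_pair _ _ HT s c) as [p Hp].
  exists p; intros z; rewrite (Hp z); split.
  - intros [-> | ->]; auto.
  - intros [Hz | Hz]; [left | right]; eapply upair_unique; eauto.
Qed.

Lemma opair_inj p a b a' b' :
  is_opair p a b -> is_opair p a' b' -> a = a' /\ b = b'.
Proof.
  intros Hp Hp'.
  assert (Hfst : a = a').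
  { destruct (ax_pair _ _ HT a a) as [s Hs].
    assert (Hsp : mem s p) by (apply Hp; left; exact Hs).
    apply Hp' in Hsp.
    assert (Ha's : mem a' s) by (destruct Hsp as [H | H]; apply H; left; reflexivity).
    apply Hs in Ha's; destruct Ha's; congruence. }
  subst a'; split; [reflexivity |].
  assert (Hsnd : forall c c', is_opair p a c -> is_opair p a c' -> c = a \/ c = c').
  { intros c c' Hc Hc'; destruct (ax_pair _ _ HT a c) as [s Hs].
    assert (Hsp : mem s p) by (apply Hc; right; exact Hs).
    assert (Hcs : mem c s) by (apply Hs; right; reflexivity).
    apply Hc' in Hsp; destruct Hsp as [H | H]; apply H in Hcs; tauto. }
  destruct (Hsnd b b' Hp Hp'), (Hsnd b' b Hp' Hp); congruence.
Qed.

Lemma pin_singleton f p a b :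
  (forall z, mem z f <-> z = p) -> is_opair p a b ->
  forall x y, pin f x y <-> x = a /\ y = b.
Proof.
  intros Hf Hp x y; split.
  - intros [q [Hq Hqxy]]; apply Hf in Hq; subst q.
    destruct (opair_inj p x y a b Hqxy Hp); auto.
  - intros [-> ->]; exists p; split; [apply Hf |]; auto.
Qed.

Lemma empty_exists : exists e, is_empty e.
Proof. destruct (ax_inf _ _ HT) as [I [[e [_ He]] _]]; eauto. Qed.

Lemma separation_inter S U : exists T, forall x, mem x T <-> mem x S /\ mem x U.
Proof. exact (ax_sep _ _ HT (FMem 0 1) (fun _ => U) S). Qed.

Lemma restriction_exists E U :
  exists A, is_relation A /\
    forall x y, pin A x y <-> pin E x y /\ mem x U /\ mem y U.
Proof.
  (* p = (a, b) with a, b in U; de Bruijn indices 0 = b, 1 = a, 2 = p, 3 = U. *)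
  destruct (ax_sep _ _ HT
              (FEx (FEx (FAnd (fopair 2 1 0) (FAnd (FMem 1 3) (FMem 0 3)))))
              (fun _ => U) E) as [A HA].
  assert (HA' : forall p, mem p A <->
            mem p E /\ exists a b, is_opair p a b /\ mem a U /\ mem b U).
  { intros p; rewrite HA; cbn [Defs.sat].
    setoid_rewrite sat_fopair; simpl; firstorder. }
  exists A; split.
  - intros p Hp; apply HA' in Hp; destruct Hp as [_ [a [b [Hp _]]]]; eauto.
  - intros x y; split.
    + intros [p [HpA Hp]]; apply HA' in HpA.
      destruct HpA as [HpE [a [b [Hp' [Ha Hb]]]]].
      destruct (opair_inj p x y a b Hp Hp'); subst.
      split; [exists p |]; auto.
    + intros [[p [HpE Hp]] [Hx Hy]]; exists p; split; [apply HA' |]; eauto 10.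
Qed.

Lemma strict_wellorder_ext U (R R' : V -> V -> Prop) :
  (forall x y, mem x U -> mem y U -> (R x y <-> R' x y)) ->
  strict_wellorder U R -> strict_wellorder U R'.
Proof.
  intros HRR' (Hirr & Htrans & Htri & Hmin); split; [| split; [| split]].
  - intros x Hx; rewrite <- HRR'; auto.
  - intros x y z Hx Hy Hz; rewrite <- !HRR'; eauto.
  - intros x y Hx Hy; rewrite <- !HRR'; auto.
  - intros S HS HSne; destruct (Hmin S HS HSne) as [m [Hm Hmin']].
    exists m; split; [exact Hm |]; intros s Hs Hsm; rewrite <- HRR'; auto.
Qed.

Lemma order_iso_ext f U E E' X :
  (forall x y, mem x U -> mem y U -> (pin E x y <-> pin E' x y)) ->
  order_iso f U E X -> order_iso f U E' X.
Proof.
  intros HEE' [Hbij Hiso]; split; [exact Hbij |].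
  intros x y u v Hx Hy Hu Hv; rewrite <- HEE'; auto.
Qed.

Lemma ordinal_intro X :
  transitive_set X ->
  (forall u, mem u X -> ~ mem u u) ->
  (forall u v w, mem u X -> mem v X -> mem w X -> mem u v -> mem v w -> mem u w) ->
  (forall u v, mem u X -> mem v X -> mem u v \/ u = v \/ mem v u) ->
  ordinal X.
Proof.
  intros HX Hirr Htrans Htri; split; [exact HX |].
  split; [exact Hirr | split; [exact Htrans | split; [exact Htri |]]].
  intros S HS HSne; destruct (ax_reg _ _ HT S HSne) as [m [Hm Hmin]].
  exists m; split; [exact Hm |]; intros s Hs Hsm.
  destruct (Htri m s) as [H | [H | H]]; auto.
  - congruence.
  - exfalso; exact (Hmin s Hs H).
Qed.

Lemma ordinal_of_order_iso f U E X :
  transitive_set X -> strict_wellorder U (pin E) -> order_iso f U E X -> ordinal X.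
Proof.
  intros HX (Hirr & Htrans & Htri & _) [[[[_ [_ Hfun]] _] Hsurj] Hiso].
  apply ordinal_intro; [exact HX | | |].
  - intros u Hu Huu; destruct (Hsurj u Hu) as [x [Hx Hxu]].
    apply (Hirr x Hx); apply (Hiso x x u u); auto.
  - intros u v w Hu Hv Hw Huv Hvw.
    destruct (Hsurj u Hu) as [x [Hx Hxu]].
    destruct (Hsurj v Hv) as [y [Hy Hyv]].
    destruct (Hsurj w Hw) as [z [Hz Hzw]].
    apply (Hiso x z u w); auto.
    apply (Htrans x y z); auto; [apply (Hiso x y u v) | apply (Hiso y z v w)]; auto.
  - intros u v Hu Hv.
    destruct (Hsurj u Hu) as [x [Hx Hxu]].
    destruct (Hsurj v Hv) as [y [Hy Hyv]].
    destruct (Htri x y Hx Hy) as [H | [-> | H]].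
    + left; apply (Hiso x y u v); auto.
    + right; left; exact (Hfun y u v Hxu Hyv).
    + right; right; apply (Hiso y x v u); auto.
Qed.

Section RestrictedWellorder.

Variables U A : V.
Hypothesis HW : strict_wellorder U (pin A).
Hypothesis HAU : forall x y, pin A x y -> mem x U /\ mem y U.

Lemma infield_mem x : infield A x -> mem x U.
Proof. intros [y [Hxy | Hyx]]; apply HAU in Hxy || apply HAU in Hyx; tauto. Qed.

Lemma wellorder_wf_rel : wf_rel A.
Proof.
  destruct HW as (Hirr & Htrans & _ & Hmin).
  intros S [s Hs]; destruct (separation_inter S U) as [T HTSU].
  destruct (classic (exists t, mem t T)) as [HTne | HTe].
  - destruct (Hmin T) as [m [HmT Hm]]; [intros t Ht; apply HTSU in Ht; tauto | exact HTne |].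
    pose proof HmT as [HmS HmU]%HTSU.
    exists m; split; [exact HmS |]; intros t Ht Htm.
    destruct (HAU _ _ Htm) as [HtU _].
    destruct (classic (t = m)) as [-> | Htm']; [exact (Hirr m HmU Htm) |].
    apply (Hirr m HmU), (Htrans m t m); auto.
    apply Hm; [apply HTSU |]; auto.
  - exists s; split; [exact Hs |]; intros t Ht Hts.
    apply HTe; exists t; apply HTSU; split; [exact Ht | apply (HAU _ _ Hts)].
Qed.

Lemma wellorder_ext_rel : ext_rel A.
Proof.
  destruct HW as (Hirr & _ & Htri & _).
  intros j k Hj%infield_mem Hk%infield_mem Hjk.
  destruct (Htri j k Hj Hk) as [H | [H | H]]; [| exact H |]; exfalso.
  - exact (Hirr j Hj (proj2 (Hjk j) H)).
  - exact (Hirr k Hk (proj1 (Hjk k) H)).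
Qed.

Lemma wellorder_infield :
  (exists a b, mem a U /\ mem b U /\ a <> b) ->
  forall x, mem x U <-> infield A x.
Proof.
  destruct HW as (_ & _ & Htri & _).
  intros [a [b [Ha [Hb Hab]]]] x; split; [| exact (infield_mem x)].
  intros Hx.
  assert (Hw : exists w, mem w U /\ w <> x).
  { destruct (classic (a = x)) as [-> | Hax]; eauto. }
  destruct Hw as [w [Hw Hwx]].
  destruct (Htri x w Hx Hw) as [H | [H | H]]; [| congruence |]; exists w; auto.
Qed.

Lemma wellorder_collapse :
  is_relation A ->
  (exists a b, mem a U /\ mem b U /\ a <> b) ->
  exists X eta, transitive_set X /\ order_iso eta U A X.
Proof.
  intros Hrel Htwo.
  destruct (ax_MC _ _ HT A Hrel wellorder_wf_rel wellorder_ext_rel U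
              (wellorder_infield Htwo)) as [X [eta [HX [Hbij Hiso]]]].
  exists X, eta; split; [exact HX |]; split; [exact Hbij |].
  destruct Hbij as [[[_ [_ Hfun]] _] _].
  intros x y u v Hx Hy Hxu Hyv; rewrite (Hiso x y Hx Hy); split.
  - intros [u' [v' [Hxu' [Hyv' Huv']]]].
    rewrite (Hfun x u u' Hxu Hxu'), (Hfun y v v' Hyv Hyv'); exact Huv'.
  - intros Huv; eauto.
Qed.

End RestrictedWellorder.

Lemma collapse_two_points U E :
  strict_wellorder U (pin E) ->
  (exists a b, mem a U /\ mem b U /\ a <> b) ->
  exists X f, transitive_set X /\ order_iso f U E X.
Proof.
  intros HW Htwo.
  destruct (restriction_exists E U) as [A [Hrel HA]].
  assert (HEA : forall x y, mem x U -> mem y U -> (pin E x y <-> pin A x y)).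
  { intros x y Hx Hy; rewrite HA; tauto. }
  assert (HWA : strict_wellorder U (pin A)) by exact (strict_wellorder_ext U _ _ HEA HW).
  assert (HAU : forall x y, pin A x y -> mem x U /\ mem y U)
    by (intros x y; rewrite HA; tauto).
  destruct (wellorder_collapse U A HWA HAU Hrel Htwo) as [X [f [HX Hf]]].
  exists X, f; split; [exact HX |].
  apply (order_iso_ext f U A E X); [| exact Hf].
  intros x y Hx Hy; symmetry; auto.
Qed.

Lemma collapse_one_point U E a :
  (forall x, mem x U <-> x = a) -> ~ pin E a a ->
  exists X f, transitive_set X /\ order_iso f U E X.
Proof.
  intros HU Haa.
  destruct empty_exists as [e He].
  destruct (ax_pair _ _ HT e e) as [o Ho].
  destruct (opair_exists a e) as [p Hp].
  destruct (ax_pair _ _ HT p p) as [f Hf].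
  assert (Ho' : forall z, mem z o <-> z = e) by (intros z; rewrite (Ho z); tauto).
  assert (Hf' : forall z, mem z f <-> z = p) by (intros z; rewrite (Hf z); tauto).
  pose proof (pin_singleton f p a e Hf' Hp) as Hpin.
  exists o, f; split; [| split; [split; [split; [split; [| split] |] |] |]].
  - intros x y Hxy Hy%Ho'; subst y; exfalso; exact (He x Hxy).
  - intros q Hq%Hf'; subst q; exists a, e; rewrite HU, Ho'; auto.
  - intros x Hx%HU; subst x; exists e; apply Hpin; auto.
  - intros x b b' Hb%Hpin Hb'%Hpin; intuition congruence.
  - intros x x' b Hx%Hpin Hx'%Hpin; intuition congruence.
  - intros b Hb%Ho'; subst b; exists a; rewrite HU, Hpin; auto.
  - intros x y u v _ _ Hxu%Hpin Hyv%Hpin.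
    destruct Hxu as [-> ->], Hyv as [-> ->]; split; intros H; exfalso;
      [exact (Haa H) | exact (He e H)].
Qed.

Lemma collapse_empty U E :
  (forall x, ~ mem x U) -> exists X f, transitive_set X /\ order_iso f U E X.
Proof.
  intros HU; destruct empty_exists as [e He].
  assert (Hpin : forall x y, ~ pin e x y) by (intros x y [p [Hp _]]; exact (He p Hp)).
  exists e, e; split; [| split; [split; [split; [split; [| split] |] |] |]].
  - intros x y _ Hy; exfalso; exact (He y Hy).
  - intros p Hp; exfalso; exact (He p Hp).
  - intros x Hx; exfalso; exact (HU x Hx).
  - intros x b b' Hb; exfalso; exact (Hpin x b Hb).
  - intros x x' b Hx; exfalso; exact (Hpin x b Hx).
  - intros b Hb; exfalso; exact (He b Hb).
  - intros x y u v Hx; exfalso; exact (HU x Hx).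
Qed.

Lemma wellorder_collapse_exists U E :
  strict_wellorder U (pin E) -> exists X f, transitive_set X /\ order_iso f U E X.
Proof.
  intros HW.
  destruct (classic (exists a b, mem a U /\ mem b U /\ a <> b)) as [Htwo | Hsub].
  { exact (collapse_two_points U E HW Htwo). }
  destruct (classic (exists a, mem a U)) as [[a Ha] | Hempty].
  - apply (collapse_one_point U E a); [| exact (proj1 HW a Ha)].
    intros x; split; [| intros ->; exact Ha].
    intros Hx; apply NNPP; intros Hxa; apply Hsub; eauto.
  - apply collapse_empty; intros x Hx; apply Hempty; eauto.
Qed.

End Collapse.

Theorem lemma9p3 (V : Type) (mem : V -> V -> Prop) (HT : ZFTMw V mem)
  (U E : V) :
  strict_wellorder V mem U (pin V mem E) ->
  exists lam f, ordinal V mem lam /\ order_iso V mem f U E lam.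
Proof.
  intros HW.
  destruct (wellorder_collapse_exists V mem HT U E HW) as [lam [f [Hlam Hf]]].
  exists lam, f; split; [| exact Hf].
  exact (ordinal_of_order_iso V mem HT f U E lam Hlam HW Hf).
Qed.
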